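(* Suppose Assumption (A1) holds, and let $\{x_k\}_{k\in\mathbb N}$, $\{y_k\}_{k\in\mathbb N}$, $\{u_k\}_{k\in\mathbb N}$ be generated by Algorithm NFBHF-M from arbitrary $x_0,u_0\in\mathcal H$. Then for every $x^*\in\operatorname{zer}(A+B+C)$ and every integer $k\ge 1$, $$\Phi_{k+1}(x^* )\le \Phi_k(x^* )-\Big(1-L_{k-1}-L_k-2\gamma_kL_k\mu-\gamma_k^2\mu^2-\frac{\gamma_k\beta}{2}\Big)\|y_k-x_k\|_S^2 .$$
   Context: $\mathcal H$ is a real Hilbert space. $\mathcal P(\mathcal H)$ denotes the set of bounded linear operators $S:\mathcal H\to\mathcal H$ that are self-adjoint and strongly positive ($\langle Sx,x\rangle\ge m\|x\|^2$ for some $m>0$ and all $x$); for such $S$, $S^{-1}\in\mathcal P(\mathcal H)$, $\langle x,y\rangle_S:=\langle Sx,y\rangle$ and $\|x\|_S:=\sqrt{\langle Sx,x\rangle}$. For $S\in\mathcal P(\mathcal H)$, a single-valued $T:\mathcal H\to\mathcal H$ is $L$-Lipschitz continuous w.r.t. $S$ if $\|Tx-Ty\|_{S^{-1}}\le L\|x-y\|_S$ for all $x,y$, and is $\beta^{-1}$-cocoercive w.r.t. $S$ ($\beta>0$) if $\langle Tx-Ty,x-y\rangle\ge \beta^{-1}\|Tx-Ty\|_{S^{-1}}^2$ for all $x,y$. $\operatorname{zer}(A+B+C)=\{x\in\mathcal H: 0\in Ax+Bx+Cx\}$. Assumption (A1): fix $S\in\mathcal P(\mathcal H)$. (i) $A:\mathcal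 H\to2^{\mathcal H}$ is maximally monotone; (ii) $B:\mathcal H\to\mathcal H$ is single-valued, monotone and $\mu$-Lipschitz continuous w.r.t. $S$ ($\mu\ge0$); (iii) $C:\mathcal H\to\mathcal H$ is $\beta^{-1}$-cocoercive w.r.t. $S$ for some $\beta>0$; (iv) $\operatorname{zer}(A+B+C)\neq\emptyset$; (v) there is $\gamma>0$ and, for each $k\in\mathbb N$, a step-size $\gamma_k\ge\gamma$, a constant $L_k\in[0,1)$ and a (possibly nonlinear) operator $M_k:\mathcal H\to\mathcal H$ such that $\gamma_kM_k-S$ is $L_k$-Lipschitz continuous w.r.t. $S$. (Under (v), $M_k$ is maximally monotone and strongly monotone, so $(M_k+A)^{-1}$ is single-valued with full domain.) Algorithm NFBHF-M (nonlinear forward–backward–half forward with momentum): given $x_0,u_0\in\mathcal H$, for $k=0,1,2,\dots$ $$y_k=(M_k+A)^{-1}\big(M_kx_k-(B+C)x_k+\gamma_k^{-1}u_k\big),\quad x_{k+1}=y_k-\gamma_kS^{-1}By_k+\gamma_kS^{-1}Bx_k,\quad u_{k+1}=(\gamma_kM_k-S)y_k-(\gamma_kM_k-S)x_k.$$ For $x\in\mathcal H$ and $k\ge1$, $\Phi_k(x):=\|x_k-x\|_S^2+2\langle u_k,x_k-x\rangle+L_{k-1}\|y_{k-1}-x_{k-1}\|_S^2$. *)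

From HB Require Import structures.
From mathcomp Require Import all_boot all_order all_algebra.
From mathcomp Require Import all_classical all_reals all_analysis.
Set Implicit Arguments. Unset Strict Implicit. Unset Printing Implicit Defensive.
Import Order.TTheory GRing.Theory Num.Theory.
Import numFieldNormedType.Exports.
Local Open Scope ring_scope.
Local Open Scope classical_set_scope.

Record inner_product (R : realType) (H : completeNormedModType R) := InnerProduct {
  ip : H -> H -> R;
  ipDl : forall x y z, ip (x + y) z = ip x z + ip y z;
  ipZl : forall (a : R) x y, ip (a *: x) y = a * ip x y;
  ipC : forall x y, ip x y = ip y x;
  ip_norm : forall x, ip x x = `|x| ^+ 2
}.

Section Defs.
Variables (R : realType) (H : completeNormedModType R) (I : inner_product H).
Local Notation "<< x , y >>" := (ip I x y).

Definition bounded_linear (S : H -> H) :=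
  (forall (a : R) x y, S (a *: x + y) = a *: S x + S y) /\
  exists c : R, forall x, `|S x| <= c * `|x|.

Definition self_adjoint (S : H -> H) := forall x y, << S x, y >> = << x, S y >>.

Definition strongly_positive (S : H -> H) :=
  exists m : R, 0 < m /\ forall x, m * `|x| ^+ 2 <= << S x, x >>.

Definition in_P (S : H -> H) :=
  bounded_linear S /\ self_adjoint S /\ strongly_positive S.

Definition normS (S : H -> H) (x : H) : R := Num.sqrt << S x, x >>.

Definition lipschitz_wrt (S Sinv : H -> H) (L : R) (T : H -> H) :=
  forall x y, normS Sinv (T x - T y) <= L * normS S (x - y).

Definition cocoercive_wrt (Sinv : H -> H) (beta : R) (T : H -> H) :=
  forall x y, beta^-1 * normS Sinv (T x - T y) ^+ 2 <= << T x - T y, x - y >>.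

Definition monotone_op (A : H -> set H) :=
  forall x y u v, A x u -> A y v -> 0 <= << u - v, x - y >>.

Definition maximally_monotone (A : H -> set H) :=
  monotone_op A /\
  forall x u, (forall y v, A y v -> 0 <= << u - v, x - y >>) -> A x u.

Definition monotone_fun (B : H -> H) :=
  forall x y, 0 <= << B x - B y, x - y >>.

Definition zer3 (A : H -> set H) (B C : H -> H) : set H :=
  [set x | A x (- (B x + C x))].

(* set-valued inverse (M + A)^{-1} z = [set y | z \in M y + A y] *)
Definition inv_sum (M : H -> H) (A : H -> set H) (z : H) : set H :=
  [set y | A y (z - M y)].

End Defs.

From HB Require Import structures.
From mathcomp Require Import all_boot all_order all_algebra.
From mathcomp Require Import all_classical all_reals all_analysis.
From mathcomp Require Import ring lra.
Set Implicit Arguments. Unset Strict Implicit. Unset Printing Implicit Defensive.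
Import Order.TTheory GRing.Theory Num.Theory.
Import numFieldNormedType.Exports.
Local Open Scope ring_scope.
Local Open Scope classical_set_scope.

(* Monotonicity of A between the resolvent point y_k and the zero x* bounds
   <S(y_k - x_k), y_k - x*>, which turns the expansion of |x_{k+1} - x*|_S^2
   along the forward correction x_{k+1} - y_k = -γ_k S^-1(B y_k - B x_k) into a
   bound by |x_k - x*|_S^2 - |y_k - x_k|_S^2; monotonicity of B absorbs the
   B-terms.  Every remaining cross term pairs a vector measured in |.|_S^-1 with
   one measured in |.|_S, so Cauchy-Schwarz for this dual pair, the Lipschitz
   bounds on γ M - S (which produce u_k, u_{k+1}) and on B, and cocoercivity of
   C followed by Young's inequality give the stated coefficient. *)

Lemma ler_young (R : realFieldType) (t s b : R) :
  0 < b -> 2 * t * s <= 2 * b^-1 * t ^+ 2 + b / 2 * s ^+ 2.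
Proof.
move=> b_gt0.
have : 0 <= b^-1 * (2 * t - b * s) ^+ 2 / 2.
  by rewrite divr_ge0 // mulr_ge0 ?sqr_ge0 // invr_ge0 ltW.
have -> : b^-1 * (2 * t - b * s) ^+ 2 / 2
        = 2 * b^-1 * t ^+ 2 + b / 2 * s ^+ 2 - 2 * t * s by field; rewrite gt_eqF.
lra.
Qed.

Section InnerProduct.
Variables (R : realType) (H : completeNormedModType R) (I : inner_product H).
Local Notation "<< x , y >>" := (ip I x y).

Lemma ipDr x y z : << z, x + y >> = << z, x >> + << z, y >>.
Proof. by rewrite ipC ipDl ![<< _, z >>]ipC. Qed.

Lemma ipZr (a : R) x y : << y, a *: x >> = a * << y, x >>.
Proof. by rewrite ipC ipZl ipC. Qed.

Lemma ipNl x y : << - x, y >> = - << x, y >>.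
Proof. by rewrite -scaleN1r ipZl mulN1r. Qed.

Lemma ipNr x y : << y, - x >> = - << y, x >>.
Proof. by rewrite ipC ipNl ipC. Qed.

Lemma ipBl x y z : << x - y, z >> = << x, z >> - << y, z >>.
Proof. by rewrite ipDl ipNl. Qed.

Lemma ipBr x y z : << z, x - y >> = << z, x >> - << z, y >>.
Proof. by rewrite ipDr ipNr. Qed.

Lemma ip0l y : << 0, y >> = 0.
Proof. by rewrite -(scale0r (0 : H)) ipZl mul0r. Qed.

Lemma ip0r y : << y, 0 >> = 0.
Proof. by rewrite ipC ip0l. Qed.

End InnerProduct.

Section SMetric.
Variables (R : realType) (H : completeNormedModType R) (I : inner_product H).
Variables (S Sinv : H -> H).
Hypothesis S_linear : forall (a : R) x y, S (a *: x + y) = a *: S x + S y.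
Hypothesis S_selfadj : self_adjoint I S.
Hypothesis S_pos : strongly_positive I S.
Hypothesis SinvK : cancel Sinv S.
Hypothesis SK : cancel S Sinv.

HB.instance Definition _ := GRing.isLinear.Build R H H *:%R S S_linear.

Local Notation "<< x , y >>" := (ip I x y).
Local Notation "`| x |_S" := (normS I S x) (format "`| x |_S").
Local Notation "`| x |_Sinv" := (normS I Sinv x) (format "`| x |_Sinv").

Lemma SinvB x y : Sinv (x - y) = Sinv x - Sinv y.
Proof. by apply: (can_inj SK); rewrite linearB /= !SinvK. Qed.

Lemma ipSC p q : << S p, q >> = << S q, p >>.
Proof. by rewrite S_selfadj ipC. Qed.

Lemma ipS_Sinv p w : << S p, Sinv w >> = << w, p >>.
Proof. by rewrite S_selfadj SinvK ipC. Qed.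

Lemma ipS_ge0 p : 0 <= << S p, p >>.
Proof.
case: S_pos => m [m_gt0 hm]; apply: le_trans (hm p).
by apply: mulr_ge0; [exact: ltW | exact: exprn_ge0].
Qed.

Lemma ipS_le0_eq0 p : << S p, p >> <= 0 -> p = 0.
Proof.
case: S_pos => m [m_gt0 hm] hp.
have : m * `|p| ^+ 2 <= 0 by apply: le_trans (hm p) hp.
rewrite pmulr_rle0 // => p2_le0.
have /eqP : `|p| ^+ 2 = 0 by apply/eqP; rewrite eq_le p2_le0 exprn_ge0.
by rewrite expf_eq0 /= normr_eq0 => /eqP.
Qed.

Lemma normS_sqr v : `|v|_S ^+ 2 = << S v, v >>.
Proof. by rewrite sqr_sqrtr // ipS_ge0. Qed.

Lemma normS_ge0 v : 0 <= `|v|_S.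
Proof. exact: sqrtr_ge0. Qed.

Lemma normS_Sinv w : `|Sinv w|_S = `|w|_Sinv.
Proof. by rewrite /normS SinvK ipC. Qed.

Lemma normSinv_ge0 w : 0 <= `|w|_Sinv.
Proof. exact: sqrtr_ge0. Qed.

Lemma normS_sqrB p q : `|p - q|_S ^+ 2 = `|p|_S ^+ 2 - 2 * << S p, q >> + `|q|_S ^+ 2.
Proof.
rewrite !normS_sqr linearB /= !(ipBl, ipBr) [<< S q, p >>]ipSC; lra.
Qed.

Lemma normS_sqrZ (a : R) v : `|a *: v|_S ^+ 2 = a ^+ 2 * `|v|_S ^+ 2.
Proof. by rewrite !normS_sqr linearZ /= ipZl ipZr mulrA -expr2. Qed.

Lemma ipS_cauchy_schwarz p q : << S p, q >> <= `|p|_S * `|q|_S.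
Proof.
set a := `|p|_S; set c := `|q|_S.
have [a0|a_neq0] := eqVneq a 0.
  have -> : p = 0 by apply: ipS_le0_eq0; rewrite -normS_sqr -/a a0 expr0n.
  by rewrite linear0 /= ip0l mulr_ge0 ?normS_ge0.
have [c0|c_neq0] := eqVneq c 0.
  have -> : q = 0 by apply: ipS_le0_eq0; rewrite -normS_sqr -/c c0 expr0n.
  by rewrite ip0r mulr_ge0 ?normS_ge0.
have ac_gt0 : 0 < a * c by rewrite mulr_gt0 // lt_def ?a_neq0 ?c_neq0 normS_ge0.
(* 0 <= |c p - a q|_S^2 = 2 a c (a c - <S p, q>) *)
have := sqr_ge0 `|c *: p - a *: q|_S.
rewrite normS_sqrB !normS_sqrZ -/a -/c [S (c *: p)]linearZ /= ipZl ipZr.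
by nra.
Qed.

Lemma ip_cauchy_schwarz w v : `|<< w, v >>| <= `|w|_Sinv * `|v|_S.
Proof.
have normSN u : `|- u|_S = `|u|_S by rewrite /normS linearN /= ipNl ipNr opprK.
rewrite -normS_Sinv -[w in << w, v >>]SinvK; apply/ler_normlP; split.
  by rewrite -ipNr -(normSN v) ipS_cauchy_schwarz.
exact: ipS_cauchy_schwarz.
Qed.

Section NFBHFStep.
Variables (A : H -> set H) (B C : H -> H) (mu beta : R).
Hypothesis A_mono : monotone_op I A.
Hypothesis B_mono : monotone_fun I B.
Hypothesis B_lip : lipschitz_wrt I S Sinv mu B.
Hypothesis beta_gt0 : 0 < beta.
Hypothesis C_coco : cocoercive_wrt I Sinv beta C.

Lemma resolvent_monotone_bound (gam : R) (Mk : H -> H) x y u u' xs :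
  0 < gam ->
  inv_sum Mk A (Mk x - (B x + C x) + gam^-1 *: u) y ->
  u' = (gam *: Mk y - S y) - (gam *: Mk x - S x) ->
  zer3 A B C xs ->
  << S (y - x), y - xs >>
    <= << u - u', y - xs >> - gam * << (B x + C x) - (B xs + C xs), y - xs >>.
Proof.
move=> gam_gt0 Ay -> Axs.
have hA := mulr_ge0 (ltW gam_gt0) (A_mono Ay Axs).
rewrite -ipZl opprK !scalerDr scalerA mulfV ?gt_eqF // scale1r in hA.
rewrite linearB /= !(ipDl, ipNl, ipZl) in hA *; lra.
Qed.

Lemma cocoercive_cross_bound (gam : R) x y xs : 0 < gam ->
  - (2 * gam) * << C x - C xs, y - xs >> <= gam * beta / 2 * `|y - x|_S ^+ 2.
Proof.
move=> gam_gt0.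
have -> : y - xs = (x - xs) + (y - x) by rewrite [RHS]addrC addrA subrK.
rewrite ipDr.
have /ler_normlP[cross _] := ip_cauchy_schwarz (C x - C xs) (y - x).
have young := ler_young `|C x - C xs|_Sinv `|y - x|_S beta_gt0.
have := ler_wpM2l (ltW gam_gt0) (C_coco x xs).
have := ler_wpM2l (ltW gam_gt0) cross.
have := ler_wpM2l (ltW gam_gt0) young.
lra.
Qed.

Lemma nfbhf_step_descent (gam Lp Lk p : R) (Mk : H -> H) x y u x' u' xs :
  0 < gam -> 0 <= Lp -> 0 <= Lk ->
  `|u|_Sinv <= Lp * p -> `|u'|_Sinv <= Lk * `|y - x|_S ->
  inv_sum Mk A (Mk x - (B x + C x) + gam^-1 *: u) y ->
  x' = y - gam *: Sinv (B y) + gam *: Sinv (B x) ->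
  u' = (gam *: Mk y - S y) - (gam *: Mk x - S x) ->
  zer3 A B C xs ->
  `|x' - xs|_S ^+ 2 + 2 * << u', x' - xs >> + Lk * `|y - x|_S ^+ 2
    <= `|x - xs|_S ^+ 2 + 2 * << u, x - xs >> + Lp * p ^+ 2
       - (1 - Lp - Lk - 2 * gam * Lk * mu - gam ^+ 2 * mu ^+ 2 - gam * beta / 2)
         * `|y - x|_S ^+ 2.
Proof.
move=> gam_gt0 Lp_ge0 Lk_ge0 u_le u'_le Ay hx' hu' Axs.
have s_ge0 := normS_ge0 (y - x).
have step := resolvent_monotone_bound gam_gt0 Ay hu' Axs.
have coco := cocoercive_cross_bound x y xs gam_gt0.
have Bmono := mulr_ge0 (ltW gam_gt0) (B_mono y xs).
have u_cross : 2 * << u, y - x >> <= Lp * p ^+ 2 + Lp * `|y - x|_S ^+ 2.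
  have /ler_normlP[_ cs] := ip_cauchy_schwarz u (y - x).
  have := ler_wpM2r s_ge0 u_le.
  have := mulr_ge0 Lp_ge0 (sqr_ge0 (p - `|y - x|_S)); lra.
have u'_cross : - (gam * << u', Sinv (B y - B x) >>) <= gam * Lk * mu * `|y - x|_S ^+ 2.
  have /ler_normlP[cs _] := ip_cauchy_schwarz u' (Sinv (B y - B x)).
  rewrite normS_Sinv in cs.
  have := ler_pM (normSinv_ge0 u') (normSinv_ge0 (B y - B x)) u'_le (B_lip y x).
  move=> /(le_trans cs) /(ler_wpM2l (ltW gam_gt0)); lra.
have B_sqr : gam ^+ 2 * `|B y - B x|_Sinv ^+ 2 <= gam ^+ 2 * mu ^+ 2 * `|y - x|_S ^+ 2.
  have := ler_pM (normSinv_ge0 _) (normSinv_ge0 _) (B_lip y x) (B_lip y x).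
  move=> /(ler_wpM2l (sqr_ge0 gam)); lra.
have -> : x' - xs = (y - xs) - gam *: Sinv (B y - B x).
  by rewrite hx' SinvB scalerBr opprB addrA [RHS]addrAC [LHS]addrAC [y - _ - xs]addrAC.
have -> : x - xs = (y - xs) - (y - x) by rewrite opprB [RHS]addrC addrA subrK.
rewrite [`|_ - gam *: _|_S ^+ 2]normS_sqrB [`|y - xs - _|_S ^+ 2]normS_sqrB.
rewrite normS_sqrZ normS_Sinv ipZr ipS_Sinv [<< u', _ >>]ipBr [<< u, _ >>]ipBr ipZr.
rewrite ipSC in step; rewrite !(ipDl, ipNl) in step coco Bmono *; lra.
Qed.

End NFBHFStep.

End SMetric.

Theorem lemma3p1 (R : realType) (H : completeNormedModType R) (I : inner_product H)
  (S Sinv : H -> H)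
  (A : H -> set H) (B C : H -> H) (mu beta gamma : R)
  (gam L : nat -> R) (M : nat -> H -> H)
  (x y u : nat -> H) (xs : H) :
  (* S in P(H), Sinv its inverse *)
  in_P I S ->
  (forall z, S (Sinv z) = z) -> (forall z, Sinv (S z) = z) ->
  (* (A1)(i) *)
  maximally_monotone I A ->
  (* (A1)(ii) *)
  monotone_fun I B -> 0 <= mu -> lipschitz_wrt I S Sinv mu B ->
  (* (A1)(iii) *)
  0 < beta -> cocoercive_wrt I Sinv beta C ->
  (* (A1)(iv) *)
  (exists z, zer3 A B C z) ->
  (* (A1)(v) *)
  0 < gamma ->
  (forall k, gamma <= gam k) ->
  (forall k, 0 <= L k < 1) ->
  (forall k, lipschitz_wrt I S Sinv (L k) (fun z => gam k *: M k z - S z)) ->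
  (* Algorithm NFBHF-M (x 0, u 0 arbitrary) *)
  (forall k, inv_sum (M k) A
       (M k (x k) - (B (x k) + C (x k)) + (gam k)^-1 *: u k) (y k)) ->
  (forall k, x k.+1 = y k - gam k *: Sinv (B (y k)) + gam k *: Sinv (B (x k))) ->
  (forall k, u k.+1 = (gam k *: M k (y k) - S (y k)) - (gam k *: M k (x k) - S (x k))) ->
  zer3 A B C xs ->
  let Phi := fun k : nat =>
    normS I S (x k - xs) ^+ 2 + 2 * ip I (u k) (x k - xs)
    + L k.-1 * normS I S (y k.-1 - x k.-1) ^+ 2 in
  forall k : nat, (1 <= k)%N ->
    Phi k.+1 <= Phi k
      - (1 - L k.-1 - L k - 2 * gam k * L k * mu - gam k ^+ 2 * mu ^+ 2
         - gam k * beta / 2) * normS I S (y k - x k) ^+ 2.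
Proof.
move=> [[S_linear _] [S_selfadj S_pos]] SinvK SK [A_mono _] B_mono _ B_lip beta_gt0
  C_coco _ gamma_gt0 gamma_le L_range M_lip y_def x_def u_def xs_zer Phi [//|k] _.
have gam_gt0 j : 0 < gam j := lt_le_trans gamma_gt0 (gamma_le j).
have L_ge0 j : 0 <= L j by case/andP: (L_range j).
have u_bound j : normS I Sinv (u j.+1) <= L j * normS I S (y j - x j).
  by rewrite u_def; exact: M_lip.
rewrite /Phi /=.
exact: (nfbhf_step_descent S_linear S_selfadj S_pos SinvK SK A_mono B_mono B_lip
  beta_gt0 C_coco (gam_gt0 k.+1) (L_ge0 k) (L_ge0 k.+1) (u_bound k) (u_bound k.+1)
  (y_def k.+1) (x_def k.+1) (u_def k.+1) xs_zer).
Qed.
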